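(* Let $K$ be a non-archimedean local field and $G$ a subgroup of $\mathrm{SL}_n(K)$. Suppose either $\mathrm{char}(K)=0$, or $\mathrm{char}(K)=p>0$ and $G$ contains no elements of order $p$. Then $G$ is discrete if and only if every cyclic subgroup of $G$ is discrete.
   Context: A non-archimedean local field is a finite extension of $\mathbb{Q}_p$ or $\mathbb{F}_q((t))$. $\mathrm{SL}_n(K)$ has the subspace topology from $K^{n^2}$. *)

From mathcomp Require Import all_boot all_order all_algebra.
From mathcomp Require Import reals.
Set Implicit Arguments. Unset Strict Implicit. Unset Printing Implicit Defensive.
Import Order.TTheory GRing.Theory Num.Theory.
Local Open Scope ring_scope.

(* We use the
   classical characterisation: K carries a non-trivial ultrametric absolute
   value for which the closed unit ball is (sequentially) compact, i.e. K is a
   non-discrete, locally compact, non-archimedean valued field.  These are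
   exactly the finite extensions of Q_p and F_q((t)). *)
Definition nonarch_local_field (R : realType) (K : fieldType) (v : K -> R) : Prop :=
  [/\ (forall x : K, 0 <= v x) /\ (forall x : K, v x = 0 <-> x = 0),
      (forall x y : K, v (x * y) = v x * v y),
      (forall x y : K, v (x + y) <= Num.max (v x) (v y)),
      (exists x : K, v x != 0 /\ v x != 1) &
      (forall u : nat -> K, (forall m, v (u m) <= 1) ->
         exists (phi : nat -> nat) (l : K),
           (forall m, (phi m < phi m.+1)%N) /\ v l <= 1 /\
           (forall e : R, 0 < e -> exists N, forall m, (N <= m)%N ->
                v (u (phi m) - l) < e))].

Definition is_subgroup_SL (K : fieldType) (n : nat) (G : 'M[K]_n -> Prop) : Prop :=
  [/\ G 1%:M,
      (forall g, G g -> \det g = 1),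
      (forall g h, G g -> G h -> G (g *m h)) &
      (forall g, G g -> G (invmx g))].

Definition mxpow (K : fieldType) (n : nat) (g : 'M[K]_n) (m : nat) : 'M[K]_n :=
  iter m (mulmx g) 1%:M.

Definition cyclic_sub (K : fieldType) (n : nat) (g : 'M[K]_n) : 'M[K]_n -> Prop :=
  fun x => exists m : nat, x = mxpow g m \/ x = mxpow (invmx g) m.

(* Discreteness of a set of matrices S in the subspace topology of K^{n^2},
   K topologised by v (product topology = entrywise sup-metric):
   every point of S is isolated in S. *)
Definition mx_discrete (R : realType) (K : fieldType) (v : K -> R) (n : nat)
    (S : 'M[K]_n -> Prop) : Prop :=
  forall g, S g -> exists2 e : R, 0 < e &
    forall h, S h -> (forall i j, v (h i j - g i j) < e) -> h = g.

Definition has_order (K : fieldType) (n : nat) (g : 'M[K]_n) (p : nat) : Prop :=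
  mxpow g p = 1%:M /\ (forall k, (0 < k < p)%N -> mxpow g k <> 1%:M).

From mathcomp Require Import all_boot all_order all_algebra.
From mathcomp Require Import reals topology normedtype sequences.
Import Order.TTheory GRing.Theory Num.Theory numFieldNormedType.Exports.
Set Implicit Arguments. Unset Strict Implicit.
Local Open Scope ring_scope.

(* Discreteness of a subgroup reduces to isolation of the identity.  Compactness
   of the unit ball forbids |m| = 1 for every positive integer m, so some prime p
   has |p| < 1.  For g near 1 the binomial expansion of g^p gives
   |g^p - 1| <= max(|p| |g - 1|, |g - 1|^2), hence g^(p^k) -> 1, and discreteness
   of <g> forces g^(p^k) = 1.  If g <> 1, some g^(p^j) has order exactly p and is
   at least as close to 1 as g.  In characteristic p this is excluded by
   hypothesis; in characteristic 0 we have |p| > 0, and the same expansion shows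
   that no element within |p| of 1 has order p. *)

Lemma exists_expr_lt (R : realType) (c e : R) : 0 <= c -> c < 1 -> 0 < e ->
  exists k, c ^+ k < e.
Proof.
move=> c0 c1 e0; have c1' : `|c| < 1 by rewrite ger0_norm.
have [N _ HN] := cvgr_dist_lt _ _ (cvg_expr c1') _ e0.
by exists N; have := HN N (leqnn N); rewrite sub0r normrN ger0_norm ?exprn_ge0.
Qed.

Lemma expr_gcdn_eq1 (S : pzSemiRingType) (x : S) a b :
  x ^+ a = 1 -> x ^+ b = 1 -> x ^+ gcdn a b = 1.
Proof.
case: a => [|a] xa xb; first by rewrite gcd0n.
have [k _ /dvdnP[q Eq]] := Bezoutl b (ltn0Sn a).
have := congr1 (GRing.exp x) Eq.
by rewrite exprD mulnC exprM xb expr1n mulr1 mulnC exprM xa expr1n.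
Qed.

Section AbsoluteValue.
Variables (R : realType) (K : fieldType) (v : K -> R).
Hypothesis hv : nonarch_local_field v.

Lemma v_ge0 x : 0 <= v x. Proof. by case: hv => [[]]. Qed.
Lemma v_eq0 x : v x = 0 <-> x = 0. Proof. by case: hv => [[]]. Qed.
Lemma vM x y : v (x * y) = v x * v y. Proof. by case: hv. Qed.
Lemma vD_le_max x y : v (x + y) <= Num.max (v x) (v y). Proof. by case: hv. Qed.

Lemma v0 : v 0 = 0. Proof. exact/v_eq0. Qed.

Lemma v1 : v 1 = 1.
Proof.
have v1_neq0 : v 1 != 0 by apply/eqP => /v_eq0/eqP; rewrite oner_eq0.
by apply: (mulfI v1_neq0); rewrite mulr1 -vM mulr1.
Qed.

Lemma vN x : v (- x) = v x.
Proof.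
suff vN1 : v (-1) = 1 by rewrite -mulN1r vM vN1 mul1r.
have /eqP : v (-1) ^+ 2 = 1 by rewrite expr2 -vM mulrNN mulr1 v1.
rewrite sqrf_eq1 => /orP[/eqP // | /eqP vN1].
by have := v_ge0 (-1); rewrite vN1 ler0N1.
Qed.

Lemma vX x k : v (x ^+ k) = v x ^+ k.
Proof. by elim: k => [|k IH]; rewrite ?v1 // !exprS vM IH. Qed.

Lemma vD_le x y b : v x <= b -> v y <= b -> v (x + y) <= b.
Proof. by move=> hx hy; apply: le_trans (vD_le_max x y) _; rewrite ge_max hx hy. Qed.

Lemma v_sum_le I (r : seq I) (P : pred I) (F : I -> K) b : 0 <= b ->
  (forall i, P i -> v (F i) <= b) -> v (\sum_(i <- r | P i) F i) <= b.
Proof.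
move=> b0 hF; elim/big_ind: _ => //; first by rewrite v0.
by move=> x y; apply: vD_le.
Qed.

Lemma v_natr_le1 m : v m%:R <= 1.
Proof.
elim: m => [|m IH]; first by rewrite v0.
by rewrite -addn1 natrD vD_le ?v1.
Qed.

Lemma exists_natr_v_lt1 : exists2 m, (0 < m)%N & v m%:R < 1.
Proof.
case: hv => _ _ _ _ /(_ (fun m => m%:R) v_natr_le1) [phi [l [phi_incr [_ phi_cvg]]]].
have [N HN] := phi_cvg 1 ltr01.
exists (phi N.+1 - phi N)%N; first by rewrite subn_gt0.
rewrite natrB ?(ltnW (phi_incr N)) //.
have -> : (phi N.+1)%:R - (phi N)%:R = ((phi N.+1)%:R - l) - ((phi N)%:R - l) :> K.
  by rewrite opprB addrA subrK.
by apply: le_lt_trans (vD_le_max _ _) _; rewrite gt_max vN !HN.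
Qed.

Lemma exists_prime_v_lt1 : exists2 p, prime p & v p%:R < 1.
Proof.
have [m m_gt0 vm] := exists_natr_v_lt1.
have [/hasP[[p e] /mem_prime_decomp[pp _ _] vp] | /hasPn v_primes] :=
  boolP (has (fun f : nat * nat => v f.1%:R < 1) (prime_decomp m)).
  by exists p.
move: vm; rewrite (prod_prime_decomp m_gt0) natr_prod (big_morph v vM v1).
rewrite big_seq big1 ?ltxx // => f /v_primes; rewrite natrX vX.
by rewrite -leNgt => vf; rewrite (@le_anti _ _ (v f.1%:R) 1) ?vf ?v_natr_le1 ?expr1n.
Qed.

Section MatrixNorm.
Variable n : nat.
Implicit Types X Y g : 'M[K]_n.

Definition mxnorm (X : 'M[K]_n) : R := \big[Num.max/0]_(ij : 'I_n * 'I_n) v (X ij.1 ij.2).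

Lemma mxnorm_ge0 X : 0 <= mxnorm X.
Proof.
apply: (big_ind (fun x => 0 <= x)) => //; first by move=> x y x0 _; rewrite le_max x0.
by move=> ij _; apply: v_ge0.
Qed.

Lemma mxnorm_ub X i j : v (X i j) <= mxnorm X.
Proof. exact: (le_bigmax _ (fun ij : 'I_n * 'I_n => v (X ij.1 ij.2)) (i, j)). Qed.

Lemma mxnorm_le X b : 0 <= b -> (forall i j, v (X i j) <= b) -> mxnorm X <= b.
Proof. by move=> b0 hX; apply: bigmax_le => // -[i j] _; apply: hX. Qed.

Lemma mxnorm0 : mxnorm 0 = 0.
Proof. by apply/le_anti; rewrite mxnorm_ge0 andbT mxnorm_le // => i j; rewrite mxE v0. Qed.

Lemma mxnorm_attained X : X != 0 -> exists i j, mxnorm X = v (X i j).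
Proof.
move=> X_neq0; case: (pickP (fun ij : 'I_n * 'I_n => X ij.1 ij.2 != 0)) => [ij _ | X0].
  have [[i j] _ E] := eq_bigmax ij xpredT (fun ij => v (X ij.1 ij.2)) isT
    (fun ij _ => v_ge0 (X ij.1 ij.2)).
  by exists i, j; rewrite -E.
case/eqP: X_neq0; apply/matrixP => i j; rewrite mxE.
by have /negbFE/eqP := X0 (i, j).
Qed.

Lemma mxnorm_eq0 X : mxnorm X = 0 -> X = 0.
Proof.
move=> X0; apply/matrixP => i j; rewrite mxE; apply/v_eq0/le_anti.
by rewrite v_ge0 andbT -X0 mxnorm_ub.
Qed.

Lemma mx_discreteP (S : 'M[K]_n -> Prop) : mx_discrete v S <->
  forall g, S g -> exists2 e, 0 < e & forall h, S h -> mxnorm (h - g) < e -> h = g.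
Proof.
split=> S_disc g Sg; have [e e0 He] := S_disc g Sg; exists e => // h Sh hg.
  apply: He => // i j; apply: le_lt_trans hg.
  by have := mxnorm_ub (h - g) i j; rewrite !mxE.
apply: He => //; apply/bigmax_ltP; split=> // -[i j] _.
by rewrite !mxE; apply: hg.
Qed.

Lemma mxnormD_le X Y b : mxnorm X <= b -> mxnorm Y <= b -> mxnorm (X + Y) <= b.
Proof.
move=> hX hY; apply: mxnorm_le => [|i j]; first exact: le_trans (mxnorm_ge0 X) hX.
by rewrite mxE vD_le // (le_trans (mxnorm_ub _ i j)).
Qed.

Lemma mxnorm_sum_le I (r : seq I) (P : pred I) (F : I -> 'M[K]_n) b : 0 <= b ->
  (forall i, P i -> mxnorm (F i) <= b) -> mxnorm (\sum_(i <- r | P i) F i) <= b.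
Proof.
move=> b0 hF; elim/big_ind: _ => //; first by rewrite mxnorm0.
by move=> X Y; apply: mxnormD_le.
Qed.

Lemma mxnormM X Y : mxnorm (X * Y) <= mxnorm X * mxnorm Y.
Proof.
have b0 := mulr_ge0 (mxnorm_ge0 X) (mxnorm_ge0 Y).
apply: mxnorm_le => // i j; rewrite -mulmxE mxE; apply: v_sum_le => // k _.
by rewrite vM ler_pM ?v_ge0 ?mxnorm_ub.
Qed.

Lemma mxnormMn X m : mxnorm (X *+ m) <= v m%:R * mxnorm X.
Proof.
apply: mxnorm_le => [|i j]; first by rewrite mulr_ge0 ?v_ge0 ?mxnorm_ge0.
by rewrite mulmxnE -[X i j *+ m]mulr_natl vM ler_wpM2l ?v_ge0 ?mxnorm_ub.
Qed.

Lemma mxnorm1 : mxnorm 1 <= 1.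
Proof. by apply: mxnorm_le => // i j; rewrite mxE; case: (i == j); rewrite ?v1 ?v0. Qed.

Lemma mxnormX X m : mxnorm (X ^+ m) <= mxnorm X ^+ m.
Proof.
elim: m => [|m IH]; first exact: mxnorm1.
by rewrite !exprS (le_trans (mxnormM _ _)) // ler_pM ?mxnorm_ge0.
Qed.

Lemma mxnorm_expr_sub1 g m : mxnorm (g - 1) <= 1 -> mxnorm (g ^+ m - 1) <= mxnorm (g - 1).
Proof.
move=> g1; have g_le1 : mxnorm g <= 1 by rewrite -(subrK 1 g) mxnormD_le ?mxnorm1.
elim: m => [|m IH]; first by rewrite expr0 subrr mxnorm0 mxnorm_ge0.
have -> : g ^+ m.+1 - 1 = g * (g ^+ m - 1) + (g - 1).
  by rewrite exprS mulrBr mulr1 addrA subrK.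
rewrite mxnormD_le // (le_trans (mxnormM _ _)) //.
by rewrite -[leRHS]mul1r ler_pM ?mxnorm_ge0.
Qed.

Lemma exprD1n_sub1 X p :
  (X + 1) ^+ p - 1 = X *+ p + \sum_(2 <= i < p.+1) X ^+ i *+ 'C(p, i).
Proof.
case: p => [|p]; first by rewrite expr0 subrr mulr0n big_geq // addr0.
rewrite exprD1n -(big_mkord xpredT (fun i => X ^+ i *+ 'C(p.+1, i))).
rewrite big_ltn // big_ltn // expr0 expr1 bin0 bin1.
by rewrite [1 + _]addrC addrK.
Qed.

Lemma mxnorm_binomial_tail X p : mxnorm X <= 1 ->
  mxnorm (\sum_(2 <= i < p.+1) X ^+ i *+ 'C(p, i)) <= mxnorm X ^+ 2.
Proof.
move=> X1; rewrite big_nat_cond; apply: mxnorm_sum_le => [|i /andP[/andP[i2 _] _]].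
  by rewrite exprn_ge0 ?mxnorm_ge0.
apply: le_trans (mxnormMn _ _) _; rewrite -[leRHS]mul1r ler_pM ?v_ge0 ?mxnorm_ge0 ?v_natr_le1 //.
by rewrite (le_trans (mxnormX _ _)) // ler_wiXn2l ?mxnorm_ge0.
Qed.

Lemma mxnorm_expr_sub1_le_max g p : mxnorm (g - 1) <= 1 ->
  mxnorm (g ^+ p - 1) <= Num.max (v p%:R * mxnorm (g - 1)) (mxnorm (g - 1) ^+ 2).
Proof.
move=> g1; rewrite -{1}(subrK 1 g) exprD1n_sub1 mxnormD_le //.
  by rewrite le_max mxnormMn.
by rewrite le_max mxnorm_binomial_tail ?orbT.
Qed.

Lemma mxnorm_expr_expn_sub1 g p c k : v p%:R <= c -> mxnorm (g - 1) <= c -> c <= 1 ->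
  mxnorm (g ^+ (p ^ k) - 1) <= c ^+ k * mxnorm (g - 1).
Proof.
move=> vp gc c1; have g1 := le_trans gc c1; have c0 := le_trans (mxnorm_ge0 _) gc.
elim: k => [|k IH]; first by rewrite expn0 expr1 expr0 mul1r.
rewrite expnSr exprM; set h := g ^+ (p ^ k).
have h1 : mxnorm (h - 1) <= mxnorm (g - 1) by apply: mxnorm_expr_sub1.
apply: le_trans (mxnorm_expr_sub1_le_max _ (le_trans h1 g1)) _.
apply: (@le_trans _ _ (c * mxnorm (h - 1))); last by rewrite exprS -mulrA ler_wpM2l.
rewrite ge_max ler_wpM2r ?mxnorm_ge0 //= expr2 ler_wpM2r ?mxnorm_ge0 //.
exact: le_trans h1 gc.
Qed.

Lemma expr_eq1_near1 g p : mxnorm (g - 1) < v p%:R -> g ^+ p = 1 -> g = 1.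
Proof.
move=> gp gp1; apply/eqP; rewrite -subr_eq0; apply/negPn/negP => g_neq1.
have [i [j gij]] := mxnorm_attained g_neq1.
have r_gt0 : 0 < mxnorm (g - 1).
  by rewrite lt_def mxnorm_ge0 andbT; apply: contra g_neq1 => /eqP/mxnorm_eq0 ->.
have g1 : mxnorm (g - 1) <= 1 := ltW (lt_le_trans gp (v_natr_le1 p)).
have E : (g - 1) *+ p = - \sum_(2 <= i < p.+1) (g - 1) ^+ i *+ 'C(p, i).
  by apply/eqP; rewrite -addr_eq0 -exprD1n_sub1 subrK gp1 subrr.
have : v p%:R * mxnorm (g - 1) <= mxnorm (g - 1) ^+ 2.
  rewrite {1}gij -vM mulr_natl -mulmxnE E mxE vN.
  by apply: le_trans (mxnorm_ub _ i j) _; apply: mxnorm_binomial_tail.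
by rewrite expr2 ler_pM2r // leNgt gp.
Qed.

End MatrixNorm.
End AbsoluteValue.

Section OrderPrime.
Variables (K : fieldType) (n : nat).
Implicit Types g : 'M[K]_n.

Lemma mxpowE g m : mxpow g m = g ^+ m.
Proof. by elim: m => //= m IH; rewrite /mxpow /= -/(mxpow g m) IH exprS. Qed.

Lemma has_order_prime g q : prime q -> g ^+ q = 1 -> g != 1 -> has_order g q.
Proof.
move=> qp gq g_neq1; split=> [|k /andP[k_gt0 kq]]; rewrite mxpowE // => gk.
have /eqP cop_kq : coprime k q by rewrite coprime_sym prime_coprime // gtnNdvd.
by move: g_neq1; rewrite -[g]expr1 -cop_kq expr_gcdn_eq1 ?eqxx.
Qed.

Lemma exists_order_prime g q k : prime q -> g ^+ (q ^ k) = 1 -> g != 1 ->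
  exists j, has_order (g ^+ (q ^ j)) q.
Proof.
move=> qp; elim: k => [|k IH] gk g_neq1.
  by rewrite expn0 expr1 in gk; rewrite gk eqxx in g_neq1.
have [/IH/(_ g_neq1) //| gk_neq1] := eqVneq (g ^+ (q ^ k)) 1.
by exists k; apply: has_order_prime => //; rewrite -exprM -expnSr.
Qed.

Lemma cyclic_sub_expr g m : cyclic_sub g (g ^+ m).
Proof. by exists m; left; rewrite mxpowE. Qed.

Variable G : 'M[K]_n -> Prop.
Hypothesis hG : is_subgroup_SL G.

Lemma subgroup_SL_expr g m : G g -> G (g ^+ m).
Proof.
by case: hG => G1 _ GM _ Gg; elim: m => [|m IH]; rewrite ?expr0 // exprS; apply: GM.
Qed.

Lemma cyclic_sub_subset g : G g -> forall x, cyclic_sub g x -> G x.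
Proof.
case: hG => _ _ _ GV Gg x [m [->|->]]; rewrite mxpowE; apply: subgroup_SL_expr => //.
exact: GV.
Qed.

End OrderPrime.

Lemma mx_discrete_subset (R : realType) (K : fieldType) (v : K -> R) n
    (S T : 'M[K]_n -> Prop) :
  (forall x, S x -> T x) -> mx_discrete v T -> mx_discrete v S.
Proof.
move=> ST T_disc g Sg; have [e e0 He] := T_disc g (ST g Sg).
by exists e => // h Sh; apply/He/ST.
Qed.

Section Discreteness.
Variables (R : realType) (K : fieldType) (v : K -> R).
Hypothesis hv : nonarch_local_field v.
Variables (n : nat) (G : 'M[K]_n -> Prop).
Hypothesis hG : is_subgroup_SL G.

Lemma mx_discrete_of_isolated_one d : 0 < d ->
  (forall h, G h -> mxnorm v (h - 1) < d -> h = 1) -> mx_discrete v G.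
Proof.
move=> d0 iso; apply/(mx_discreteP v G) => g Gg.
have [_ Gdet GM GV] := hG.
have gu : g \in unitmx by rewrite unitmxE Gdet ?unitr1.
set M := mxnorm v (invmx g) + 1.
have M0 : 0 < M by rewrite ltr_wpDl ?mxnorm_ge0.
exists (d / M) => [|h Gh hg]; first by rewrite divr_gt0.
suff E : invmx g *m h = 1 by rewrite -(mulKVmx gu h) E mulmx1.
apply: iso; first exact: GM (GV _ Gg) Gh.
have -> : invmx g *m h - 1 = invmx g * (h - g) by rewrite mulrBr -!mulmxE mulVmx.
apply: le_lt_trans (mxnormM hv _ _) _.
apply: (@le_lt_trans _ _ (M * mxnorm v (h - g))).
  by rewrite ler_wpM2r ?(mxnorm_ge0 hv) // lerDl.
by rewrite -ltr_pdivlMl // mulrC.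
Qed.

Lemma isolated_one p d : prime p -> v p%:R < 1 -> 0 < d -> d < 1 ->
  (forall g, G g -> mxnorm v (g - 1) < d -> ~ has_order g p) ->
  (forall g, G g -> mx_discrete v (cyclic_sub g)) ->
  forall h, G h -> mxnorm v (h - 1) < d -> h = 1.
Proof.
move=> pp vp1 d0 d1 no_order cyc_disc h Gh hd.
have h1 : mxnorm v (h - 1) <= 1 := ltW (lt_trans hd d1).
have := (mx_discreteP v _).1 (cyc_disc h Gh) _ (cyclic_sub_expr h 0).
rewrite expr0 => -[e e0 He].
set c := Num.max (v p%:R) d.
have [k ck] : exists k, c ^+ k < e.
  by apply: exists_expr_lt; rewrite ?le_max ?v_ge0 // gt_max vp1 d1.
have hk : h ^+ (p ^ k) = 1.
  apply: He; first exact: cyclic_sub_expr.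
  have vp_c : v p%:R <= c by rewrite le_max lexx.
  have h_c : mxnorm v (h - 1) <= c by rewrite le_max (ltW hd) orbT.
  have c1 : c <= 1 by rewrite ge_max (ltW vp1) (ltW d1).
  apply: le_lt_trans (mxnorm_expr_expn_sub1 hv k vp_c h_c c1) _.
  by rewrite (le_lt_trans _ ck) // ler_piMr ?exprn_ge0 ?(le_trans (v_ge0 hv _) vp_c).
apply/eqP/negPn/negP => h_neq1.
have [j hj] := exists_order_prime pp hk h_neq1.
apply: no_order hj; first exact: subgroup_SL_expr.
exact: le_lt_trans (mxnorm_expr_sub1 hv _ h1) hd.
Qed.

Lemma exists_ball_without_order_prime :
  ((forall p : nat, p \notin [pchar K]) \/
   (exists p : nat, p \in [pchar K] /\ ~ (exists g, G g /\ has_order g p))) ->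
  exists p d, [/\ prime p, v p%:R < 1, 0 < d, d < 1 &
    forall g, G g -> mxnorm v (g - 1) < d -> ~ has_order g p].
Proof.
case=> [char0 | [p [pc no_order]]].
  have [p pp vp1] := exists_prime_v_lt1 hv.
  have vp0 : 0 < v p%:R.
    rewrite lt_def v_ge0 // andbT; apply/eqP => /(v_eq0 hv) p0.
    by have := char0 p; rewrite inE /= pp p0 eqxx.
  exists p, (v p%:R); split => // g _ gp [gp1 g_neq1].
  apply: (g_neq1 1%N); first by rewrite /= prime_gt1.
  by rewrite mxpowE expr1 (expr_eq1_near1 hv gp) // -mxpowE.
exists p, 2^-1; split.
- exact: pcharf_prime pc.
- by rewrite (pcharf0 pc) (v0 hv).
- by rewrite invr_gt0.
- by rewrite invf_lt1 ?ltr1n.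
- by move=> g Gg _ gp; apply: no_order; exists g.
Qed.

End Discreteness.

Theorem proposition1p4 (R : realType) (K : fieldType) (v : K -> R)
  (n : nat) (G : 'M[K]_n -> Prop) :
  nonarch_local_field v ->
  is_subgroup_SL G ->
  ((forall p : nat, p \notin [pchar K]) \/
   (exists p : nat, p \in [pchar K] /\ ~ (exists g, G g /\ has_order g p))) ->
  (mx_discrete v G <->
   (forall g, G g -> mx_discrete v (cyclic_sub g))).
Proof.
move=> hv hG hchar; split=> [G_disc g Gg | cyc_disc].
  exact: mx_discrete_subset (cyclic_sub_subset hG Gg) G_disc.
have [p [d [pp vp1 d0 d1 no_order]]] := exists_ball_without_order_prime hv hchar.
apply: (mx_discrete_of_isolated_one hv hG d0).
exact: (isolated_one hv hG pp vp1 d0 d1 no_order cyc_disc).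
Qed.
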